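(* Let $k \geq 3$ and let $G$ be a diregular $(2,k,+3)$-digraph. Then $G$ contains a pair of distinct vertices $u,v$ with exactly one common out-neighbour, i.e. $|N^+(u)\cap N^+(v)|=1$.
   Context: A digraph $G$ is $k$-geodetic if for every ordered pair of (not necessarily distinct) vertices $x,y$ there is at most one directed path from $x$ to $y$ of length at most $k$ (the trivial path of length $0$ counts, so there are no directed cycles of length at most $k$). $M(d,k)=1+d+\dots+d^k$. A $(d,k,+\epsilon)$-digraph is a $k$-geodetic digraph with minimum out-degree $d$ and order $M(d,k)+\epsilon$; it is diregular if every vertex has in-degree and out-degree exactly $d$. $N^+(x)$ denotes the set of out-neighbours of $x$. *)

From mathcomp Require Import all_boot.
Set Implicit Arguments. Unset Strict Implicit. Unset Printing Implicit Defensive.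

Definition outN (V : finType) (e : rel V) (x : V) : {set V} := [set y | e x y].
Definition inN (V : finType) (e : rel V) (x : V) : {set V} := [set y | e y x].

(* A directed walk of length l from x to y is a sequence p (the vertices after x)
   with path e x p, size p = l and last x p = y.  The trivial path is p = [::].
   k-geodetic: for every ordered pair x,y at most one such walk of length <= k. *)
Definition k_geodetic (V : finType) (e : rel V) (k : nat) : Prop :=
  forall (x y : V) (p q : seq V),
    path e x p -> last x p = y -> size p <= k ->
    path e x q -> last x q = y -> size q <= k -> p = q.

Definition Moore (d k : nat) : nat := \sum_(0 <= i < k.+1) d ^ i.

Definition min_outdeg_is (V : finType) (e : rel V) (d : nat) : Prop :=
  (forall x, d <= #|outN e x|) /\ (exists x, #|outN e x| = d).

Definition dk_eps_digraph (V : finType) (e : rel V) (d k eps : nat) : Prop :=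
  [/\ k_geodetic e k, min_outdeg_is e d & #|V| = Moore d k + eps].

Definition diregular (V : finType) (e : rel V) (d : nat) : Prop :=
  forall x, #|outN e x| = d /\ #|inN e x| = d.

From mathcomp Require Import all_boot zify.

(* Suppose no two distinct vertices have exactly one common out-neighbour.  As all
   in- and out-degrees are 2, every vertex u then has an out-twin t (N+(t) = N+(u))
   and an in-twin s (N-(s) = N-(u)), and geodecity keeps all twins of u out of the
   ball B(u) of vertices at distance at most k from u.  B(u) has M(2,k) vertices, so
   its complement is exactly {t, s, s'} with s' an in-twin of t.  Let w be an
   out-neighbour of u and w' an out-twin of w.  An in-neighbour of w' equal to t, s
   or s' would close two distinct walks of length 2 or 3 with common ends, so both
   in-neighbours of w' lie in B(u); then w' is within distance k of w, which
   geodecity forbids for a twin of w. *)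

Set Implicit Arguments.
Unset Strict Implicit.
Unset Printing Implicit Defensive.

Section FinsetFacts.
Variable T : finType.

Lemma card_bigcup_disjoint (I : finType) (A : {set I}) (F : I -> {set T}) :
    {in A &, forall i j, i != j -> [disjoint F i & F j]} ->
  #|\bigcup_(i in A) F i| = \sum_(i in A) #|F i|.
Proof.
move=> disjF; pose G i := if i \in A then F i else set0.
have -> : \bigcup_(i in A) F i = \bigcup_i G i.
  by rewrite big_mkcond; apply: eq_bigr => i _; rewrite /G; case: ifP.
rewrite -sum1_card partition_disjoint_bigcup => [|i j ij]; rewrite /G.
  rewrite [in RHS]big_mkcond; apply: eq_bigr => i _.
  by case: ifP => _; [exact: sum1_card | exact: big_set0].
by case: ifP => Ai; case: ifP => Aj; try exact: disjF; rewrite -setI_eq0 ?setI0 ?set0I.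
Qed.

Lemma card2_other (A : {set T}) x : #|A| = 2 -> exists2 y, y \in A & y != x.
Proof.
move=> A2; have /card_gt0P[y] : 0 < #|A :\ x|.
  by move: (cardsD1 x A); rewrite A2; case: (x \in A) => /=; lia.
by rewrite !inE => /andP[yx Ay]; exists y.
Qed.

Lemma card2_eq (A : {set T}) x y :
  #|A| = 2 -> x != y -> x \in A -> y \in A -> A = [set x; y].
Proof.
move=> A2 xy Ax Ay; apply/esym/eqP; rewrite eqEcard cards2 xy A2 leqnn andbT.
by apply/subsetP => z /set2P[] ->.
Qed.

Lemma card3_eq (A : {set T}) x y z : #|A| = 3 -> [&& x != y, x != z & y != z] ->
  x \in A -> y \in A -> z \in A -> A = [set x; y; z].
Proof.
move=> A3 /and3P[xy xz yz] Ax Ay Az; apply/esym/eqP; rewrite eqEcard A3.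
have -> : #|[set x; y; z]| = 3 by rewrite -setUA cardsU1 cards2 yz !inE negb_or xy xz.
by rewrite leqnn andbT; apply/subsetP => w; rewrite !inE => /orP[/orP[]|] /eqP ->.
Qed.

End FinsetFacts.

Lemma MooreS d j : Moore d j.+1 = 1 + d * Moore d j.
Proof.
rewrite /Moore big_nat_recl // expn0 big_distrr /=.
by congr (1 + _); apply: eq_bigr => i _; rewrite expnS.
Qed.

Section Ball.
Variables (V : finType) (e : rel V).

Fixpoint ball (j : nat) (u : V) : {set V} :=
  if j is j'.+1 then u |: \bigcup_(w in outN e u) ball j' w else [set u].

Lemma ballP j u y :
  reflect (exists p, [/\ path e u p, last u p = y & size p <= j]) (y \in ball j u).
Proof.
elim: j u y => [|j IH] u y /=.
  rewrite inE; apply: (iffP eqP) => [->|[p [_ <-]]]; first by exists [::].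
  by case: p.
rewrite in_setU1; apply: (iffP orP) => [[/eqP ->|/bigcupP[w]]|[[|w p] [/= walk <- len]]].
- by exists [::].
- by rewrite inE => uw /IH[p [walk <- len]]; exists (w :: p); rewrite /= uw.
- by left.
- case/andP: walk => uw walk; right; apply/bigcupP; exists w; rewrite ?inE //.
  by apply/IH; exists p.
Qed.

Lemma ball_lastP j u z :
  reflect (z = u \/ exists2 y, y \in ball j u & e y z) (z \in ball j.+1 u).
Proof.
apply: (iffP (ballP _ _ _)) => [[p]|[->|[y /ballP[p [walk <- len]] yz]]].
- case/lastP: p => [|p y] [/=]; first by left.
  rewrite rcons_path last_rcons size_rcons => /andP[walk yz] <- len.
  by right; exists (last u p) => //; apply/ballP; exists p.
- by exists [::].
- by exists (rcons p z); rewrite rcons_path walk yz last_rcons size_rcons.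
Qed.

Lemma in_twin_in_ball j u z z' :
  z != u -> (forall y, e y z = e y z') -> z \in ball j u -> z' \in ball j u.
Proof.
case: j => [|j] zu twin; first by rewrite inE (negbTE zu).
case/ball_lastP => [/eqP|[y y_in yz]]; first by rewrite (negbTE zu).
by apply/ball_lastP; right; exists y; rewrite // -twin.
Qed.

Section Geodetic.
Variable k : nat.
Hypothesis geo : k_geodetic e k.

Lemma geodetic_mid2 a b b' c : 2 <= k -> e a b -> e b c -> e a b' -> e b' c -> b = b'.
Proof.
move=> k2 ab bc ab' b'c.
have [] // : [:: b; c] = [:: b'; c].
by apply: (geo (x := a) (y := c)); rewrite //= ?ab ?bc ?ab' ?b'c.
Qed.

Lemma geodetic_mid3 a b b' c c' d : 3 <= k ->
  e a b -> e b c -> e c d -> e a b' -> e b' c' -> e c' d -> b = b'.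
Proof.
move=> k3 ab bc cd ab' b'c' c'd.
have [] // : [:: b; c; d] = [:: b'; c'; d].
by apply: (geo (x := a) (y := d)); rewrite //= ?ab ?bc ?cd ?ab' ?b'c' ?c'd.
Qed.

Lemma notin_ball_in_neighbour j u w : j < k -> e u w -> u \notin ball j w.
Proof.
move=> jk uw; apply/negP => /ballP[p [walk wp_u len]].
have lenk : size (w :: p) <= k := leq_ltn_trans len jk.
suff : w :: p = [::] by [].
by apply: (geo (x := u) (y := u)); rewrite /= ?uw.
Qed.

Lemma ball_disjoint j u w w' : j < k -> e u w -> e u w' -> w != w' ->
  [disjoint ball j w & ball j w'].
Proof.
move=> jk uw uw' ww'; rewrite -setI_eq0; apply/eqP/setP => y; rewrite !inE.
apply/negP => /andP[/ballP[p [walk <- len]] /ballP[q [walk' q_end len']]].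
have lenp : size (w :: p) <= k := leq_ltn_trans len jk.
have lenq : size (w' :: q) <= k := leq_ltn_trans len' jk.
have [/eqP] : w :: p = w' :: q by apply: (geo (x := u) (y := last w p)); rewrite /= ?uw ?uw'.
by rewrite (negbTE ww').
Qed.

Lemma card_ball d j u :
  (forall x, #|outN e x| = d) -> j <= k -> #|ball j u| = Moore d j.
Proof.
move=> reg; elim: j u => [|j IH] u jk /=; first by rewrite cards1 /Moore big_nat1.
have u_out : u \notin \bigcup_(w in outN e u) ball j w.
  by apply/bigcupP => -[w]; rewrite inE => uw; apply/negP/notin_ball_in_neighbour.
rewrite cardsU1 u_out card_bigcup_disjoint => [|w w']; last first.
  by rewrite !inE; apply: ball_disjoint.
rewrite (eq_bigr (fun=> Moore d j)) => [|w _]; last exact/IH/ltnW.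
by rewrite sum_nat_const reg MooreS.
Qed.

Lemma out_twin_notin_ball u z : z != u -> e z =1 e u -> z \notin ball k u.
Proof.
move=> zu twin; apply/negP => /ballP[[|a q] [/= walk uq_z len]].
  by rewrite uq_z eqxx in zu.
case/andP: walk => ua walk.
have /negP : z \notin ball (size q) a.
  by apply: notin_ball_in_neighbour; rewrite ?twin.
by apply; apply/ballP; exists q.
Qed.

Lemma in_twin_notin_ball u z : z != u -> (forall y, e y z = e y u) -> z \notin ball k u.
Proof.
move=> zu twin; apply/negP => /ballP[p [walk walk_z len]].
case/lastP: p walk walk_z len => [_ /= zu'|q y]; first by rewrite zu' eqxx in zu.
rewrite rcons_path last_rcons size_rcons => /andP[walk qy] yz len; subst y.
have /negP : last u q \notin ball (size q) u.
  by apply: notin_ball_in_neighbour; rewrite -?twin.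
by apply; apply/ballP; exists q.
Qed.

Lemma mem_ball_out_neighbour u w z y1 y2 :
  #|outN e u| = 2 -> e u w -> y1 != y2 -> e y1 z -> e y2 z ->
  y1 \in ball k u -> y2 \in ball k u -> z \in ball k w.
Proof.
move=> deg uw y12 y1z y2z /ballP[p1 [walk1 end1 len1]] /ballP[p2 [walk2 end2 len2]].
have step p y : path e u p -> last u p = y -> size p <= k -> e y z ->
    [/\ e u (head z p), path e (head z p) (behead (rcons p z)),
        last (head z p) (behead (rcons p z)) = z & size (behead (rcons p z)) <= k].
  move=> walk endp len yz; have : path e u (rcons p z) by rewrite rcons_path walk endp yz.
  rewrite headI /= => /andP[ua walk']; split; rewrite ?size_behead ?size_rcons //.
  by have := last_rcons u p z; rewrite headI.
have [ua1 walk1' end1' len1'] := step _ _ walk1 end1 len1 y1z.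
have [ua2 walk2' end2' len2'] := step _ _ walk2 end2 len2 y2z.
(* The walks to z through y1 and through y2 leave u by different arcs: otherwise
   their tails from the common first vertex would be two walks of length <= k. *)
have a12 : head z p1 != head z p2.
  move: y12; apply: contra_neq => a12; rewrite -end1 -end2.
  have /rcons_inj[p12] : rcons p1 z = rcons p2 z; last by rewrite p12.
  rewrite headI [rcons p2 z]headI -a12; congr (_ :: _).
  by apply: (geo (x := head z p1) (y := z)); rewrite // a12.
have : w \in outN e u by rewrite inE.
rewrite (card2_eq deg a12) ?inE // => /orP[] /eqP ->; apply/ballP.
  by exists (behead (rcons p1 z)).
by exists (behead (rcons p2 z)).
Qed.

End Geodetic.
End Ball.

Section Diregular.
Variables (V : finType) (e : rel V).
Hypothesis reg : diregular e 2.

Lemma out_neighbour x : exists y, e x y.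
Proof.
have /card_gt0P[y] : 0 < #|outN e x| by rewrite (reg x).1.
by rewrite inE; exists y.
Qed.

Lemma in_neighbour x : exists y, e y x.
Proof.
have /card_gt0P[y] : 0 < #|inN e x| by rewrite (reg x).2.
by rewrite inE; exists y.
Qed.

Section GeodeticTwins.
Variable k : nat.
Hypothesis geo : k_geodetic e k.

Lemma out_twins_eq x w w' : 2 <= k -> e w' =1 e w -> e x w -> e x w' -> w' = w.
Proof.
move=> k2 twin xw xw'; have [c wc] := out_neighbour w.
by apply/esym/(geodetic_mid2 geo k2 xw wc xw'); rewrite twin.
Qed.

Lemma full_twins_eq x x' : 2 <= k ->
  (forall y, e y x' = e y x) -> e x' =1 e x -> x' = x.
Proof.
move=> k2 in_twin out_twin; have [p px] := in_neighbour x.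
by apply: (out_twins_eq k2 out_twin px); rewrite in_twin.
Qed.

Lemma in_twins_eq u s w w' : 3 <= k ->
  (forall y, e y s = e y u) -> e w' =1 e w -> e u w -> e s w' -> s = u.
Proof.
move=> k3 in_twin out_twin uw sw'.
have [p pu] := in_neighbour u; have [c wc] := out_neighbour w.
apply/esym/(geodetic_mid3 (b' := s) (c' := w') geo k3 pu uw wc);
  by rewrite ?in_twin ?out_twin.
Qed.

End GeodeticTwins.

Section NoSingleCommonOutNeighbour.
Hypothesis no_single : forall u v, u != v -> #|outN e u :&: outN e v| != 1.

Lemma common_out_neighbour_twins u v w : u != v -> e u w -> e v w -> e v =1 e u.
Proof.
move=> uv uw vw; set I := outN e u :&: outN e v.
have I2 : #|I| = 2.
  have : 0 < #|I| by apply/card_gt0P; exists w; rewrite !inE uw vw.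
  have : #|I| <= 2 by rewrite -(reg u).1 subset_leq_card ?subsetIl.
  by move: (no_single uv); rewrite -/I; lia.
have Iu : I = outN e u by apply/eqP; rewrite eqEcard subsetIl (reg u).1 I2.
have Iv : I = outN e v by apply/eqP; rewrite eqEcard subsetIr (reg v).1 I2.
by move=> y; have /setP/(_ y) := etrans (esym Iv) Iu; rewrite !inE.
Qed.

Lemma exists_out_twin u : exists2 t, t != u & e t =1 e u.
Proof.
have [w uw] := out_neighbour u.
have [t] := card2_other u (reg w).2; rewrite inE => tw tu.
by exists t => //; apply: (common_out_neighbour_twins _ uw tw); rewrite eq_sym.
Qed.

Lemma exists_in_twin u : exists2 s, s != u & forall y, e y s = e y u.
Proof.
have [p pu] := in_neighbour u.
have [s] := card2_other u (reg p).1; rewrite inE => ps su.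
have sub : inN e u \subset inN e s.
  apply/subsetP => y; rewrite !inE => yu; have [-> //|yp] := eqVneq y p.
  by rewrite -(common_out_neighbour_twins yp yu pu).
have E : inN e s = inN e u by apply/esym/eqP; rewrite eqEcard sub (reg u).2 (reg s).2.
by exists s => // y; have /setP/(_ y) := E; rewrite !inE.
Qed.

Section ExcessThree.
Variable k : nat.
Hypotheses (geo : k_geodetic e k) (k3 : 3 <= k) (cardV : #|V| = Moore 2 k + 3).

Lemma card_ballC u : #|~: ball e k u| = 3.
Proof.
apply/(@addnI (Moore 2 k)).
by rewrite -{1}(card_ball geo u (fun x => (reg x).1) (leqnn k)) cardsC cardV.
Qed.

Lemma ballC_twins u t s s' :
  t != u -> e t =1 e u -> s != u -> (forall y, e y s = e y u) ->
  s' != t -> (forall y, e y s' = e y t) -> ~: ball e k u = [set t; s; s'].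
Proof.
move=> tu tout su sin s't s'in; have k2 := ltnW k3.
have s'u : s' != u.
  apply: contra_neq tu => s'_u; subst s'.
  by apply: (full_twins_eq geo k2 _ tout) => y; rewrite s'in.
have ts : t != s.
  by apply: contra_neq tu => t_s; subst s; apply: (full_twins_eq geo k2 sin tout).
have ss' : s != s'.
  apply: contra_neq tu => s_s'; subst s'.
  by apply: (full_twins_eq geo k2 _ tout) => y; rewrite -s'in sin.
apply: card3_eq; rewrite ?card_ballC ?ts ?ss' ?(eq_sym t s') ?s't ?inE //.
- exact: out_twin_notin_ball.
- exact: in_twin_notin_ball.
- by apply: contra (out_twin_notin_ball geo tu tout); apply: in_twin_in_ball.
Qed.

Lemma in_neighbour_out_twin_in_ball u w tw y :
  e u w -> tw != w -> e tw =1 e w -> e y tw -> y \in ball e k u.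
Proof.
move=> uw tww twin ytw; have k2 := ltnW k3.
have [t tu tout] := exists_out_twin u.
have [s su sin] := exists_in_twin u.
have [s' s't s'in] := exists_in_twin t.
apply: contraT; rewrite -in_setC (ballC_twins tu tout su sin s't s'in) !inE.
case/orP => [/orP[]|] /eqP eqy; subst y.
- by case/eqP: tww; apply: (out_twins_eq geo k2 twin uw); rewrite -tout.
- by case/eqP: su; apply: (in_twins_eq geo k3 sin twin uw).
- by case/eqP: s't; apply: (in_twins_eq geo k3 s'in twin); rewrite ?tout.
Qed.

Lemma no_single_common_out_neighbour_contra : False.
Proof.
have /card_gt0P[u _] : 0 < #|V| by rewrite cardV addn3.
have [w uw] := out_neighbour u.
have [tw tww twin] := exists_out_twin w.
have [y1 y1tw] := in_neighbour tw.
have [y2] := card2_other y1 (reg tw).2; rewrite inE => y2tw y21.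
case/negP: (out_twin_notin_ball geo tww twin).
apply: (mem_ball_out_neighbour geo (reg u).1 uw y21 y2tw y1tw);
  exact: in_neighbour_out_twin_in_ball uw tww twin _.
Qed.

End ExcessThree.
End NoSingleCommonOutNeighbour.
End Diregular.

Theorem theorem2 (V : finType) (e : rel V) (k : nat) :
  3 <= k -> dk_eps_digraph e 2 k 3 -> diregular e 2 ->
  exists u v : V, u != v /\ #|outN e u :&: outN e v| = 1.
Proof.
move=> k3 [geo _ cardV] reg.
have [/existsP[u /existsP[v /andP[uv /eqP one]]]|none] :=
  boolP [exists u, exists v, (u != v) && (#|outN e u :&: outN e v| == 1)].
  by exists u, v.
case: (no_single_common_out_neighbour_contra reg _ geo k3 cardV) => u v uv.
by apply: contra none => one; apply/existsP; exists u; apply/existsP; exists v; rewrite uv.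
Qed.
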